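(* Let $\mathcal{M}$ be a relative category. Then $N_\xi\mathcal{M}$ is Reedy fibrant if and only if, for all $n\ge1$, $m\ge0$ and $0\le k\le n$, every relative functor $\mathcal{S}_{k,n,m}\to\mathcal{M}$ extends to a relative functor $\xi(\hat{\underline n}\times\check{\underline m})\to\mathcal{M}$, where $\mathcal{S}_{k,n,m}\subseteq\xi(\hat{\underline n}\times\check{\underline m})$ is the full relative subposet $c\mathrm{Sd}^2(\Lambda^k[n]\times\Delta[m]\cup_{\Lambda^k[n]\times\partial\Delta[m]}\Delta[n]\times\partial\Delta[m])$ described below.
   Context: A relative category is a category with a subcategory of weak equivalences containing all objects; relative functors preserve weak equivalences; $\mathrm{RelCat}$ is their category. For a poset $P$ with a relative structure, $\xi P$ is the relative poset whose objects are strictly increasing sequences $A_0\subsetneq\dots\subsetneq A_r$ ($r\ge0$) of non-empty finite totally ordered subsets of $P$, with $B_\bullet\le A_\bullet$ iff each $B_j$ occurs among the $A_i$, a weak equivalence iff $\min B_0\le\min A_0$ is a weak equivalence of $P$. Here $\underline p=(0<\dots<p)$, $\check{\underline p}$ has only identities as weak equivalences, $\hat{\underline q}$ has all morphisms as weak equivalences, and products carry componentwise weak equivalences; so in $\hat{\underline n}\times\check{\underline m}$ the relation $(a,u)\le(a',u')$ is a weak equivalence iff $u=u'$. The underlying poset of $\xi(\hat{\underline n}\times\check{\underline m})$ is $c\mathrm{Sd}^2(\Delta[n]\times\Delta[m])$ ($c$ = fundamental category, $\mathrm{Sd}$ = barycentric subdivision). A totally ordered subset $S$ of $[n]\times[m]$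 lies in $\Lambda^k[n]\times\Delta[m]\cup\Delta[n]\times\partial\Delta[m]$ iff its set of first coordinates is neither $[n]$ nor $[n]\setminus\{k\}$ or its set of second coordinates is not all of $[m]$; $\mathcal{S}_{k,n,m}$ is the full subposet of chains $A_0\subsetneq\dots\subsetneq A_r$ whose largest member $A_r$ has this property, with the induced relative structure. $N_\xi\mathcal{M}$ is the bisimplicial set $(p,q)\mapsto\mathrm{RelCat}(\xi(\check{\underline p}\times\hat{\underline q}),\mathcal{M})$; viewed as the simplicial object $p\mapsto(N_\xi\mathcal{M})_{p\bullet}$ in simplicial sets, it is Reedy fibrant if all matching maps are Kan fibrations. *)

From mathcomp Require Import all_boot.
Set Implicit Arguments. Unset Strict Implicit. Unset Printing Implicit Defensive.

Record Cat := MkCat {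
  Ob : Type; Ar : Type;
  dom : Ar -> Ob; cod : Ar -> Ob;
  idA : Ob -> Ar;
  comp : Ar -> Ar -> Ar;             (* comp g f = g o f, defined when cod f = dom g *)
  dom_id : forall a, dom (idA a) = a;
  cod_id : forall a, cod (idA a) = a;
  dom_comp : forall f g, cod f = dom g -> dom (comp g f) = dom f;
  cod_comp : forall f g, cod f = dom g -> cod (comp g f) = cod g;
  comp_id_l : forall f, comp (idA (cod f)) f = f;
  comp_id_r : forall f, comp f (idA (dom f)) = f;
  comp_assoc : forall f g h, cod f = dom g -> cod g = dom h ->
     comp h (comp g f) = comp (comp h g) f }.

Record RelCat := MkRelCat {
  rcat :> Cat;
  W : Ar rcat -> Prop;
  W_id : forall a, W (idA a);
  W_comp : forall f g, cod f = dom g -> W f -> W g -> W (comp g f) }.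

(* functor data on a carrier T; only its values on the domain D matter *)
Record pfun (M : Cat) (T : Type) := PFun { fo : T -> Ob M; fa : T -> T -> Ar M }.

Definition precomp (M : Cat) (T T' : Type) (g : T' -> T) (F : pfun M T) : pfun M T' :=
  PFun (fun x => fo F (g x)) (fun x y => fa F (g x) (g y)).

Definition is_rfun (M : RelCat) (T : Type) (D : pred T) (le we : rel T)
    (F : pfun M T) : Prop :=
  (forall x y, D x -> D y -> le x y ->
      dom (fa F x y) = fo F x /\ cod (fa F x y) = fo F y) /\
  (forall x, D x -> fa F x x = idA (fo F x)) /\
  (forall x y z, D x -> D y -> D z -> le x y -> le y z ->
      fa F x z = comp (fa F y z) (fa F x y)) /\
  (forall x y, D x -> D y -> le x y -> we x y -> W (fa F x y)).

Definition agree (M : Cat) (T : Type) (D : pred T) (le : rel T) (F G : pfun M T) : Prop :=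
  (forall x, D x -> fo F x = fo G x) /\
  (forall x y, D x -> D y -> le x y -> fa F x y = fa G x y).

Section Xi.
Variables (V : finType) (leV weV : rel V).

Definition chain (A : {set V}) : bool :=
  [forall x in A, forall y in A, leV x y || leV y x].

Definition xi_obj : pred (seq {set V}) := fun s =>
  [&& s != [::], all (fun A => (A != set0) && chain A) s
    & sorted (fun A B : {set V} => A \proper B) s].

Definition xi_le : rel (seq {set V}) := fun B A => all (fun Bj => Bj \in A) B.

Definition is_min (A : {set V}) (x : V) : bool := (x \in A) && [forall y in A, leV x y].

(* B <= A is a weak equivalence iff min B_0 <= min A_0 is one in V *)
Definition xi_we : rel (seq {set V}) := fun B A =>
  [exists x, exists y, [&& is_min (head set0 B) x, is_min (head set0 A) y & weV x y]].
End Xi.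

Definition xmap (V V' : finType) (g : V' -> V) (s : seq {set V'}) : seq {set V} :=
  map (fun A : {set V'} => g @: A) s.

Notation grid p q := ('I_p.+1 * 'I_q.+1)%type.

Definition grid_le (p q : nat) : rel (grid p q) :=
  fun x y => (x.1 <= y.1)%N && (x.2 <= y.2)%N.
(* check p x hat q : weak equivalences are the x <= y with equal first coordinate *)
Definition we_ch (p q : nat) : rel (grid p q) :=
  fun x y => grid_le x y && (x.1 == y.1).
(* hat n x check m : weak equivalences are the x <= y with equal second coordinate *)
Definition we_hc (n m : nat) : rel (grid n m) :=
  fun x y => grid_le x y && (x.2 == y.2).

Definition hmap (p q : nat) (l : 'I_p.+2) : grid p q -> grid p.+1 q :=
  fun x => (lift l x.1, x.2).
Definition vmap (p q : nat) (i : 'I_q.+2) : grid p q -> grid p q.+1 :=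
  fun x => (x.1, lift i x.2).

Section NXi.
Variable M : RelCat.

Definition NXT (p q : nat) := pfun M (seq {set grid p q}).

(* element of (N_xi M)_{p,q}: relative functor xi(check p x hat q) -> M *)
Definition is_NX (p q : nat) (F : NXT p q) : Prop :=
  is_rfun (xi_obj (@grid_le p q)) (@xi_le _)
          (xi_we (@grid_le p q) (@we_ch p q)) F.
Definition eqNX (p q : nat) (F G : NXT p q) : Prop :=
  agree (xi_obj (@grid_le p q)) (@xi_le _) F G.

Definition dh (p q : nat) (l : 'I_p.+2) (F : NXT p.+1 q) : NXT p q :=
  precomp (xmap (@hmap p q l)) F.
Definition dv (p q : nat) (i : 'I_q.+2) (F : NXT p q.+1) : NXT p q :=
  precomp (xmap (@vmap p q i)) F.
End NXi.

Record ssdata := SSD {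
  el : nat -> Type;
  okS : forall q, el q -> Prop;
  eqvS : forall q, el q -> el q -> Prop;
  faceS : forall q, 'I_q.+2 -> el q.+1 -> el q }.

Definition compat (X : ssdata) (n : nat) : pred 'I_n.+2 -> ('I_n.+2 -> el X n) -> Prop :=
  match n as n0 return pred 'I_n0.+2 -> ('I_n0.+2 -> el X n0) -> Prop with
  | 0 => fun _ _ => True
  | n'.+1 => fun D y => forall i j : 'I_n'.+3, (i < j)%N -> D i -> D j ->
       eqvS (faceS (inord i) (y j)) (faceS (inord j.-1) (y i))
  end.

(* f : X -> Y is a Kan fibration: every horn Lambda^k[n+1] -> X (compatible
   family of faces y_i, i <> k) over an (n+1)-simplex z of Y lifts *)
Definition kan_fib (X Y : ssdata) (f : forall q, el X q -> el Y q) : Prop :=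
  forall (n : nat) (k : 'I_n.+2) (y : 'I_n.+2 -> el X n) (z : el Y n.+1),
    (forall i, i != k -> okS (y i)) -> okS z ->
    compat (fun i => i != k) y ->
    (forall i, i != k -> eqvS (faceS i z) (f n (y i))) ->
    exists x : el X n.+1, okS x /\ (forall i, i != k -> eqvS (faceS i x) (y i))
                        /\ eqvS (f n.+1 x) z.

Section Reedy.
Variable M : RelCat.

Definition VX (p : nat) : ssdata :=
  @SSD (fun q => NXT M p q) (fun q => @is_NX M p q) (fun q => @eqNX M p q)
       (fun q i F => dv i F).

Definition HX (q : nat) : ssdata :=
  @SSD (fun p => NXT M p q) (fun p => @is_NX M p q) (fun p => @eqNX M p q)
       (fun p l F => dh l F).

(* matching object M_{p'+1}(N_xi M) at level q: compatible families of the
   p'+2 faces, i.e. maps from the boundary of Delta[p'+1] *)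
Definition MX (p' : nat) : ssdata :=
  @SSD (fun q => 'I_p'.+2 -> NXT M p' q)
       (fun q z => (forall l, is_NX (z l)) /\ @compat (HX q) p' predT z)
       (fun q z z' => forall l, eqNX (z l) (z' l))
       (fun q i z => fun l => dv i (z l)).

Definition mmap (p' : nat) : forall q, el (VX p'.+1) q -> el (MX p') q :=
  fun q x => fun l => dh l x.

Definition ptS : ssdata :=
  @SSD (fun _ => unit) (fun _ _ => True) (fun _ _ _ => True) (fun _ _ _ => tt).

(* Reedy fibrancy of p |-> (N_xi M)_{p,.}: all matching maps are Kan
   fibrations (for p = 0 the matching object is the point) *)
Definition reedy_fibrant : Prop :=
  kan_fib (fun q (_ : el (VX 0) q) => tt : el ptS q) /\
  forall p' : nat, kan_fib (@mmap p').

(* A lies in Lambda^k[n] x Delta[m] u Delta[n] x dDelta[m] *)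
Definition S_set (n m : nat) (k : 'I_n.+1) (A : {set grid n m}) : bool :=
  [&& [set x.1 | x in A] != setT & [set x.1 | x in A] != setT :\ k]
  || ([set x.2 | x in A] != setT).

Definition S_obj (n m : nat) (k : 'I_n.+1) : pred (seq {set grid n m}) :=
  fun s => xi_obj (@grid_le n m) s && S_set k (last set0 s).

Definition extension_property : Prop :=
  forall (n m : nat) (k : 'I_n.+1), (1 <= n)%N ->
  forall F : pfun M (seq {set grid n m}),
    is_rfun (S_obj k) (@xi_le _) (xi_we (@grid_le n m) (@we_hc n m)) F ->
    exists G : pfun M (seq {set grid n m}),
      is_rfun (xi_obj (@grid_le n m)) (@xi_le _) (xi_we (@grid_le n m) (@we_hc n m)) G
      /\ agree (S_obj k) (@xi_le _) G F.
End Reedy.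

From mathcomp Require Import all_boot zify.
Set Implicit Arguments. Unset Strict Implicit. Unset Printing Implicit Defensive.

(* A filling problem for the matching map of N_xi M is a family of relative
   functors on xi of the faces of the grid [p+1] x [n+1]: the faces in the
   check direction and those in the hat direction other than the k-th.  The
   simplicial identities make them agree on xi of the pairwise intersections.
   Since every member of a chain lies in its largest member, such a family
   glues to one relative functor on the chains whose largest member lies in
   some face; after transposing the grid this is S_{k,n+1,p+1}, and a filler
   is the same as an extension of the glued functor to all of xi.  Conversely,
   the faces of a relative functor on S_{k,n+1,p+1} form such a horn. *)

Section RelativeFunctors.
Variables (M : RelCat) (T : Type) (le we : rel T).

Lemma is_rfun_sub (D D' : pred T) (F : pfun M T) :
  (forall x, D' x -> D x) -> is_rfun D le we F -> is_rfun D' le we F.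
Proof. by move=> sD [Fo [Fid [Fcomp Fwe]]]; split; [|split; [|split]]; auto. Qed.

Lemma is_rfun_pred0 (D : pred T) (F : pfun M T) : D =1 pred0 -> is_rfun D le we F.
Proof. by move=> D0; split; [|split; [|split]] => x; rewrite D0. Qed.

Lemma is_rfun_precomp (T' : Type) (D : pred T) (D' : pred T') (le' we' : rel T')
    (h : T' -> T) (F : pfun M T) :
  (forall x, D' x -> D (h x)) ->
  (forall x y, D' x -> D' y -> le' x y -> le (h x) (h y)) ->
  (forall x y, D' x -> D' y -> le' x y -> we' x y -> we (h x) (h y)) ->
  is_rfun D le we F -> is_rfun D' le' we' (precomp h F).
Proof.
move=> hD hle hwe [Fo [Fid [Fcomp Fwe]]]; split; [|split; [|split]] => /=.
- by move=> x y Dx Dy xy; apply: Fo; auto.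
- by move=> x Dx; apply: Fid; auto.
- by move=> x y z Dx Dy Dz xy yz; apply: Fcomp; auto.
- by move=> x y Dx Dy xy wxy; apply: Fwe; auto.
Qed.
End RelativeFunctors.

Section Agreement.
Variables (M : Cat) (T : Type) (le : rel T).
Implicit Types (D : pred T) (F G H : pfun M T).

Lemma agree_refl D F : agree D le F F.
Proof. by []. Qed.

Lemma agree_sym D F G : agree D le F G -> agree D le G F.
Proof. by move=> [Eo Ea]; split=> *; [rewrite Eo | rewrite Ea]. Qed.

Lemma agree_trans D F G H : agree D le F G -> agree D le G H -> agree D le F H.
Proof. by move=> [Eo Ea] [Eo' Ea']; split=> *; [rewrite Eo ?Eo' | rewrite Ea ?Ea']. Qed.

Lemma agree_sub D D' F G : (forall x, D' x -> D x) -> agree D le F G -> agree D' le F G.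
Proof. by move=> sD'D [Eo Ea]; split=> *; [apply: Eo | apply: Ea]; auto. Qed.

Lemma agree_pred0 D F G : D =1 pred0 -> agree D le F G.
Proof. by move=> D0; split=> x; rewrite D0. Qed.

Lemma agree_precomp (T' : Type) (D : pred T) (D' : pred T') (le' : rel T')
    (h : T' -> T) F G :
  (forall x, D' x -> D (h x)) ->
  (forall x y, D' x -> D' y -> le' x y -> le (h x) (h y)) ->
  agree D le F G -> agree D' le' (precomp h F) (precomp h G).
Proof. by move=> hD hle [Eo Ea]; split=> * /=; [apply: Eo | apply: Ea]; auto. Qed.

Lemma agree_precomp_id (D : pred T) (h : T -> T) F :
  (forall x, D x -> h x = x) -> agree D le (precomp h F) F.
Proof. by move=> hid; split=> * /=; rewrite !hid. Qed.
End Agreement.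

Section XiChains.
Variables (T : finType) (le : rel T).
Implicit Types (s B A : seq {set T}) (U : {set T}).

Definition xi_over U : pred (seq {set T}) :=
  fun s => xi_obj le s && (last set0 s \subset U).

Lemma xi_obj_last_neq0 s : xi_obj le s -> last set0 s != set0.
Proof.
case: s => [|a t] //= /and3P [_ /allP nonempty _].
by case/andP: (nonempty _ (mem_last a t)).
Qed.

Lemma xi_obj_sub_last s (X : {set T}) : xi_obj le s -> X \in s -> X \subset last set0 s.
Proof.
case: s => [|a t] // /and3P [_ _ /= sorted_t]; elim: t a sorted_t X => [|b t IHt] a /=.
  by move=> _ X; rewrite inE => /eqP ->.
case/andP=> /proper_sub sab path_t X; rewrite inE => /orP [/eqP ->|Xt].
  exact: subset_trans sab (IHt b path_t b (mem_head _ _)).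
exact: IHt.
Qed.

Lemma xi_le_sub_last B A : xi_obj le B -> xi_obj le A -> xi_le B A ->
  last set0 B \subset last set0 A.
Proof.
case: B => [|b t] // oB oA /allP BA.
exact: xi_obj_sub_last oA (BA _ (mem_last b t)).
Qed.

Lemma xi_le_trans (C : seq {set T}) B A : xi_le C B -> xi_le B A -> xi_le C A.
Proof. by move=> /allP CB /allP BA; apply/allP => X /CB /BA. Qed.

Lemma xi_over_le U B A : xi_obj le B -> xi_le B A -> xi_over U A -> xi_over U B.
Proof.
move=> oB BA /andP [oA sAU]; rewrite /xi_over oB.
exact: subset_trans (xi_le_sub_last oB oA BA) sAU.
Qed.

Lemma xi_over_subset U (U' : {set T}) s : U \subset U' -> xi_over U s -> xi_over U' s.
Proof. by move=> sUU' /andP [os sl]; rewrite /xi_over os (subset_trans sl). Qed.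

Lemma xi_overI U (U' : {set T}) s : xi_over (U :&: U') s = xi_over U s && xi_over U' s.
Proof. by rewrite /xi_over subsetI; case: (xi_obj le s). Qed.

Lemma xi_over0 : xi_over set0 =1 pred0.
Proof.
move=> s; apply/negbTE/andP => [[os]].
by rewrite subset0 (negbTE (xi_obj_last_neq0 os)).
Qed.
End XiChains.

Lemma xmap_comp (U V T : finType) (g : V -> T) (h : U -> V) (s : seq {set U}) :
  xmap g (xmap h s) = xmap (g \o h) s.
Proof. by rewrite /xmap -map_comp; apply: eq_map => A /=; rewrite imset_comp. Qed.

Lemma eq_xmap (V T : finType) (g h : V -> T) : g =1 h -> xmap g =1 xmap h.
Proof. by move=> gh s; apply: eq_map => A; apply: eq_imset. Qed.

Lemma last_xmap (V T : finType) (g : V -> T) (s : seq {set V}) :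
  last set0 (xmap g s) = g @: last set0 s.
Proof.
by case: s => [|A s] /=; [rewrite imset0 | rewrite (last_map (fun X : {set V} => g @: X))].
Qed.

Lemma xi_le_map (V T : finType) (f : {set V} -> {set T}) (B A : seq {set V}) :
  xi_le B A -> xi_le (map f B) (map f A).
Proof. by move=> /allP BA; apply/allP => _ /mapP [X XB ->]; rewrite map_f ?BA. Qed.

Section Embedding.
Variables (V T : finType) (leV weV : rel V) (leT weT : rel T) (g : V -> T).
Hypotheses (g_inj : injective g) (g_le : forall x y, leT (g x) (g y) = leV x y).
Hypothesis g_we : forall x y, weT (g x) (g y) = weV x y.

Definition xpre (s : seq {set T}) : seq {set V} := map (fun A : {set T} => g @^-1: A) s.

Lemma preim_imset (A : {set V}) : g @^-1: (g @: A) = A.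
Proof. by apply/setP => x; rewrite inE mem_imset. Qed.

Lemma xmapK : cancel (xmap g) xpre.
Proof. by elim=> //= A s ->; rewrite preim_imset. Qed.

Lemma imset_properE (A B : {set V}) : (g @: A \proper g @: B) = (A \proper B).
Proof.
apply/idP/idP => [gAB|]; last by apply: imset_proper => x y _ _ /g_inj.
rewrite -(preim_imset A) -(preim_imset B); apply: preimset_proper gAB.
by apply/subsetP => _ /imsetP [x _ ->]; apply: codom_f.
Qed.

Lemma chain_imset (A : {set V}) : chain leT (g @: A) = chain leV A.
Proof.
apply/forall_inP/forall_inP => [H x xA|H _ /imsetP [x xA ->]].
  apply/forall_inP => y yA; rewrite -!g_le.
  by apply: (forall_inP (H _ (imset_f g xA))); apply: imset_f.
by apply/forall_inP => _ /imsetP [y yA ->]; rewrite !g_le; apply: (forall_inP (H x xA)).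
Qed.

Lemma is_min_imset (A : {set V}) x : is_min leT (g @: A) (g x) = is_min leV A x.
Proof.
rewrite /is_min mem_imset //; congr andb; apply/forall_inP/forall_inP => H y yA.
  by rewrite -g_le; apply: H; apply: imset_f.
by case/imsetP: yA => z zA ->; rewrite g_le; apply: H.
Qed.

Lemma xi_obj_xmap (t : seq {set V}) : xi_obj leT (xmap g t) = xi_obj leV t.
Proof.
rewrite /xi_obj /xmap sorted_map all_map; congr [&& _, _ & _]; first by case: t.
  by apply: eq_all => A /=; rewrite imset_eq0 chain_imset.
by apply: eq_sorted => A B /=; rewrite imset_properE.
Qed.

Lemma xi_we_xmap (B A : seq {set V}) :
  xi_we leT weT (xmap g B) (xmap g A) = xi_we leV weV B A.
Proof.
have head_xmap t : head set0 (xmap g t) = g @: head set0 t by case: t; rewrite //= imset0.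
rewrite /xi_we !head_xmap; apply/existsP/existsP => [[x /existsP [y]]|[x /existsP [y]]].
  case/and3P=> /[dup] /andP [/imsetP [x' _ ->] _] mx /[dup] /andP [/imsetP [y' _ ->] _] my w.
  by exists x'; apply/existsP; exists y'; rewrite -!is_min_imset mx my -g_we.
case/and3P=> mx my w; exists (g x); apply/existsP; exists (g y).
by rewrite !is_min_imset g_we mx my.
Qed.

Lemma xi_over_xmap (t : seq {set V}) : xi_obj leV t -> xi_over leT (g @: setT) (xmap g t).
Proof. by move=> ot; rewrite /xi_over xi_obj_xmap ot last_xmap imsetS ?subsetT. Qed.

Lemma xpreK (s : seq {set T}) : xi_over leT (g @: setT) s -> xmap g (xpre s) = s.
Proof.
case/andP=> os sl; rewrite /xmap /xpre -map_comp -[RHS]map_id; apply/eq_in_map => A As.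
apply/setP => x /=.
apply/imsetP/idP => [[y]|xA]; first by rewrite inE => yA ->.
have /imsetP [y _ exy] := subsetP (subset_trans (xi_obj_sub_last os As) sl) x xA.
by exists y; rewrite // inE -exy.
Qed.

Lemma xi_obj_xpre (s : seq {set T}) : xi_over leT (g @: setT) s -> xi_obj leV (xpre s).
Proof. by move=> os; rewrite -xi_obj_xmap xpreK //; case/andP: os. Qed.

Lemma xi_we_xpre (B A : seq {set T}) :
  xi_over leT (g @: setT) B -> xi_over leT (g @: setT) A ->
  xi_we leT weT B A -> xi_we leV weV (xpre B) (xpre A).
Proof. by move=> oB oA; rewrite -xi_we_xmap !xpreK. Qed.

Lemma is_rfun_xmap (M : RelCat) (D : pred (seq {set T})) (D' : pred (seq {set V}))
    (F : pfun M (seq {set T})) :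
  (forall t, D' t -> D (xmap g t)) ->
  is_rfun D (@xi_le T) (xi_we leT weT) F ->
  is_rfun D' (@xi_le V) (xi_we leV weV) (precomp (xmap g) F).
Proof.
move=> D'D; apply: is_rfun_precomp => // B A _ _; first exact: xi_le_map.
by rewrite xi_we_xmap.
Qed.

Lemma is_rfun_xpre (M : RelCat) (F : pfun M (seq {set V})) :
  is_rfun (xi_obj leV) (@xi_le V) (xi_we leV weV) F ->
  is_rfun (xi_over leT (g @: setT)) (@xi_le T) (xi_we leT weT) (precomp xpre F).
Proof.
apply: is_rfun_precomp => [s|B A _ _|B A oB oA _]; [exact: xi_obj_xpre|exact: xi_le_map|].
exact: xi_we_xpre.
Qed.

Lemma agree_over_image (M : Cat) (X Y : pfun M (seq {set T})) :
  agree (xi_obj leV) (@xi_le V) (precomp (xmap g) X) (precomp (xmap g) Y) ->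
  agree (xi_over leT (g @: setT)) (@xi_le T) X Y.
Proof.
move=> [Eo Ea]; split=> [s os|B A oB oA BA].
  by rewrite -(xpreK os); apply: Eo; apply: xi_obj_xpre.
rewrite -(xpreK oB) -(xpreK oA); apply: Ea; rewrite ?xi_obj_xpre //; exact: xi_le_map.
Qed.

Lemma agree_xmap_xpre (M : Cat) (X : pfun M (seq {set T})) (Y : pfun M (seq {set V})) :
  agree (xi_over leT (g @: setT)) (@xi_le T) X (precomp xpre Y) ->
  agree (xi_obj leV) (@xi_le V) (precomp (xmap g) X) Y.
Proof.
move=> [Eo Ea]; split=> [t ot|tB tA oB oA BA] /=; first by rewrite Eo ?xi_over_xmap //= xmapK.
by rewrite Ea ?xi_over_xmap ?xi_le_map //= !xmapK.
Qed.
End Embedding.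

Lemma agree_xpre_pair (M : Cat) (W V1 V2 T : finType) (leW : rel W) (leT : rel T)
    (g1 : V1 -> T) (g2 : V2 -> T) (h1 : W -> V1) (h2 : W -> V2)
    (X1 : pfun M (seq {set V1})) (X2 : pfun M (seq {set V2})) :
  injective g1 -> injective g2 -> injective (g1 \o h1) ->
  (forall x y, leT (g1 (h1 x)) (g1 (h1 y)) = leW x y) -> g1 \o h1 =1 g2 \o h2 ->
  g1 @: setT :&: g2 @: setT \subset (g1 \o h1) @: setT ->
  agree (xi_obj leW) (@xi_le W) (precomp (xmap h1) X1) (precomp (xmap h2) X2) ->
  agree (xi_over leT (g1 @: setT :&: g2 @: setT)) (@xi_le T)
        (precomp (xpre g1) X1) (precomp (xpre g2) X2).
Proof.
move=> g1_inj g2_inj gh_inj gh_le g12 sI [Eo Ea].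
have through_W s : xi_over leT (g1 @: setT :&: g2 @: setT) s ->
    let t := xpre (g1 \o h1) s in
    [/\ xpre g1 s = xmap h1 t, xpre g2 s = xmap h2 t & xi_obj leW t].
  move=> /(xi_over_subset sI) os t; have st := xpreK os.
  split; last exact: (xi_obj_xpre (g := g1 \o h1) gh_inj gh_le os).
    by rewrite -{1}st -xmap_comp xmapK.
  by rewrite -{1}st (eq_xmap g12) -xmap_comp xmapK.
split=> [s os|B A oB oA BA] /=; first by case: (through_W s os) => -> -> ot; apply: Eo.
case: (through_W B oB) (through_W A oA) => [-> -> oB'] [-> -> oA'].
by apply: Ea => //; apply: xi_le_map.
Qed.

Definition xi_cover (T : finType) (le : rel T) (I : finType) (U : I -> {set T}) :
  pred (seq {set T}) := fun s => xi_obj le s && [exists i, last set0 s \subset U i].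

Lemma xi_cover_over (T : finType) (le : rel T) (I : finType) (U : I -> {set T}) i s :
  xi_over le (U i) s -> xi_cover le U s.
Proof. by case/andP=> os sl; rewrite /xi_cover os; apply/existsP; exists i. Qed.

Lemma agree_cover (M : Cat) (T : finType) (le : rel T) (I : finType) (U : I -> {set T})
    (X Y : pfun M (seq {set T})) :
  (forall i, agree (xi_over le (U i)) (@xi_le T) X Y) -> agree (xi_cover le U) (@xi_le T) X Y.
Proof.
move=> XY; split=> [s|B A /andP [oB _]] /andP [os /existsP [i si]].
  by apply: (XY i).1; apply/andP.
move=> BA; have oA : xi_over le (U i) A by apply/andP.
by apply: (XY i).2 => //; apply: xi_over_le oA.
Qed.

Section Glue.
Variables (M : RelCat) (T : finType) (le we : rel T) (I : finType) (i0 : I).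
Variables (U : I -> {set T}) (E : I -> pfun M (seq {set T})).
Hypothesis E_rfun : forall i, is_rfun (xi_over le (U i)) (@xi_le T) (xi_we le we) (E i).
Hypothesis E_agree : forall i j, agree (xi_over le (U i :&: U j)) (@xi_le T) (E i) (E j).

(* Any face containing the last set would do: [E_agree] makes the choice irrelevant. *)
Definition glue_index (s : seq {set T}) : I := odflt i0 [pick i | last set0 s \subset U i].

Definition glue : pfun M (seq {set T}) :=
  PFun (fun s => fo (E (glue_index s)) s) (fun B A => fa (E (glue_index A)) B A).

Lemma glue_indexP s : xi_cover le U s -> xi_over le (U (glue_index s)) s.
Proof.
case/andP=> os /existsP [i si]; rewrite /xi_over os /glue_index.
by case: pickP => [j //|/(_ i)]; rewrite si.
Qed.

Lemma glue_agree i : agree (xi_over le (U i)) (@xi_le T) glue (E i).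
Proof.
have glue_over s : xi_over le (U i) s -> xi_over le (U (glue_index s) :&: U i) s.
  by move=> os; rewrite xi_overI os glue_indexP ?(xi_cover_over os).
split=> [s os|B A /andP [oB _] oA BA] /=; first by apply: (E_agree _ _).1; apply: glue_over.
have oA' := glue_over A oA.
exact: (E_agree (glue_index A) i).2 B A (xi_over_le oB BA oA') oA' BA.
Qed.

Lemma glue_rfun : is_rfun (xi_cover le U) (@xi_le T) (xi_we le we) glue.
Proof.
have over B A : xi_cover le U B -> xi_cover le U A -> xi_le B A ->
    xi_over le (U (glue_index A)) B.
  by move=> /andP [oB _] /glue_indexP oA BA; apply: xi_over_le oA.
split; [|split; [|split]].
- move=> B A cB cA BA; have oB := over B A cB cA BA; have oA := glue_indexP cA.
  by rewrite (glue_agree (glue_index A)).1 //; apply: (E_rfun _).1.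
- by move=> s /glue_indexP os; apply: (E_rfun _).2.1.
- move=> C B A cC cB cA CB BA; have oC := over C A cC cA (xi_le_trans CB BA).
  have oB := over B A cB cA BA; rewrite [fa glue C B](glue_agree (glue_index A)).2 //.
  exact: (E_rfun _).2.2.1 (glue_indexP cA) _ _.
- by move=> B A cB cA BA; apply: (E_rfun _).2.2.2 (over B A cB cA BA) (glue_indexP cA) BA.
Qed.
End Glue.

Lemma lift_inord_lt n (i j : 'I_n.+2) : i < j -> lift j (inord i : 'I_n.+1) = i.
Proof.
move=> ij; apply: val_inj => /=.
by rewrite inordK ?(leq_trans ij (ltn_ord j)) // /bump leqNgt ij.
Qed.

Lemma lift_lift_lt n (i j : 'I_n.+3) (x : 'I_n.+1) : i < j ->
  lift j (lift (inord i) x) = lift i (lift (inord j.-1) x).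
Proof.
move=> ij; apply: val_inj => /=.
have i_lt : i < n.+2 by apply: leq_trans ij (ltn_ord j).
have j_lt : j.-1 < n.+2 by case: (nat_of_ord j) (ltn_ord j) ij.
rewrite !inordK // /bump; case: (nat_of_ord j) ij j_lt => [|j'] // ij _ /=.
case: (nat_of_ord i) ij => [|i'] ij; case: (nat_of_ord x) => [|x'] /=;
  repeat (case: leqP => ? /=); lia.
Qed.

Lemma lift_lift_image n (i j a : 'I_n.+3) : i < j -> a != i -> a != j ->
  exists b : 'I_n.+1, a = lift j (lift (inord i) b).
Proof.
move=> ij ai; rewrite eq_sym => /unlift_some [a' ea _]; subst a.
have /unlift_some [b -> _] : inord i != a'.
  by apply: contraNneq ai => <-; rewrite lift_inord_lt.
by exists b.
Qed.

Lemma lift_neq n (k : 'I_n.+1) j : lift k j != k.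
Proof. by rewrite eq_sym neq_lift. Qed.

Lemma ord2_neq (a i j : 'I_2) : i != j -> a != i -> a != j -> False.
Proof. by case: a i j => [[|[|?]] ?] [[|[|?]] ?] [[|[|?]] ?]. Qed.

Definition vface {p q : nat} (i : 'I_q.+1) : {set grid p q} := [set x | x.2 != i].
Definition hface {p q : nat} (l : 'I_p.+1) : {set grid p q} := [set x | x.1 != l].

Section GridFaces.
Context {p q : nat}.

Lemma vmap_inj {i} : injective (@vmap p q i).
Proof. by move=> [a b] [c d] e; move: (congr1 fst e) (congr1 snd e) => /= -> /lift_inj ->. Qed.

Lemma hmap_inj {l} : injective (@hmap p q l).
Proof. by move=> [a b] [c d] e; move: (congr1 fst e) (congr1 snd e) => /= /lift_inj -> ->. Qed.

Lemma grid_le_vmap {i} x y : grid_le (@vmap p q i x) (vmap i y) = grid_le x y.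
Proof. by rewrite /grid_le /= leq_bump2. Qed.

Lemma grid_le_hmap {l} x y : grid_le (@hmap p q l x) (hmap l y) = grid_le x y.
Proof. by rewrite /grid_le /= leq_bump2. Qed.

Lemma we_ch_vmap {i} x y : we_ch (@vmap p q i x) (vmap i y) = we_ch x y.
Proof. by rewrite /we_ch grid_le_vmap. Qed.

Lemma we_ch_hmap {l} x y : we_ch (@hmap p q l x) (hmap l y) = we_ch x y.
Proof. by rewrite /we_ch grid_le_hmap (inj_eq lift_inj). Qed.

Lemma vmap_image i : @vmap p q i @: setT = vface i.
Proof.
apply/setP => -[a b]; rewrite inE /=; apply/imsetP/idP => [[[c d] _ [_ ->]]|].
  by rewrite eq_sym neq_lift.
by rewrite eq_sym => /unlift_some [d -> _]; exists (a, d).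
Qed.

Lemma hmap_image l : @hmap p q l @: setT = hface l.
Proof.
apply/setP => -[a b]; rewrite inE /=; apply/imsetP/idP => [[[c d] _ [-> _]]|].
  by rewrite eq_sym neq_lift.
by rewrite eq_sym => /unlift_some [c -> _]; exists (c, b).
Qed.
End GridFaces.

Lemma vmap_vmap_lt p n (i j : 'I_n.+3) : i < j ->
  @vmap p n.+1 j \o @vmap p n (inord i) =1 vmap i \o vmap (inord j.-1).
Proof. by move=> ij [a b]; rewrite /vmap /= lift_lift_lt. Qed.

Lemma hmap_hmap_lt p n (i j : 'I_p.+3) : i < j ->
  @hmap p.+1 n j \o @hmap p n (inord i) =1 hmap i \o hmap (inord j.-1).
Proof. by move=> ij [a b]; rewrite /hmap /= lift_lift_lt. Qed.

Lemma hmap_vmap p n (l : 'I_p.+2) (i : 'I_n.+2) :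
  @hmap p n.+1 l \o @vmap p n i =1 vmap i \o hmap l.
Proof. by case. Qed.

Lemma vface_vface_lt p n (i j : 'I_n.+3) : i < j ->
  vface j :&: vface i \subset (@vmap p n.+1 j \o @vmap p n (inord i)) @: setT.
Proof.
move=> ij; apply/subsetP => -[a b]; rewrite !inE /= => /andP [bj bi].
by have [c ->] := lift_lift_image ij bi bj; apply/imsetP; exists (a, c).
Qed.

Lemma hface_hface_lt p n (i j : 'I_p.+3) : i < j ->
  hface j :&: hface i \subset (@hmap p.+1 n j \o @hmap p n (inord i)) @: setT.
Proof.
move=> ij; apply/subsetP => -[a b]; rewrite !inE /= => /andP [aj ai].
by have [c ->] := lift_lift_image ij ai aj; apply/imsetP; exists (c, b).
Qed.

Lemma hface_vface p n (l : 'I_p.+2) (i : 'I_n.+2) :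
  hface l :&: vface i \subset (@hmap p n.+1 l \o @vmap p n i) @: setT.
Proof.
apply/subsetP => -[a b]; rewrite !inE /= !(eq_sym _ l) !(eq_sym _ i).
by case/andP=> /unlift_some [c -> _] /unlift_some [d -> _]; apply/imsetP; exists (c, d).
Qed.

Lemma vface2_disjoint p (i j : 'I_2) : i != j -> vface i :&: vface j = set0 :> {set grid p 1}.
Proof.
by move=> ij; apply/setP => x; rewrite !inE; apply/negbTE/andP => -[]; apply: ord2_neq ij.
Qed.

Lemma hface2_disjoint n (i j : 'I_2) : i != j -> hface i :&: hface j = set0 :> {set grid 1 n}.
Proof.
by move=> ij; apply/setP => x; rewrite !inE; apply/negbTE/andP => -[]; apply: ord2_neq ij.
Qed.

Lemma hface0 n (l : 'I_1) : hface l = set0 :> {set grid 0 n}.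
Proof. by apply/setP => x; rewrite !inE !ord1. Qed.

Definition swp {p q : nat} (x : grid p q) : grid q p := (x.2, x.1).

Section Transpose.
Context {p q : nat}.

Lemma swpK : cancel (@swp p q) (@swp q p).
Proof. by case. Qed.

Lemma swp_inj : injective (@swp p q).
Proof. exact: can_inj swpK. Qed.

Lemma grid_le_swp x y : grid_le (@swp p q x) (swp y) = grid_le x y.
Proof. by rewrite /grid_le andbC. Qed.

Lemma we_ch_swp x y : we_ch (@swp p q x) (swp y) = we_hc x y.
Proof. by rewrite /we_ch /we_hc grid_le_swp. Qed.

Lemma we_hc_swp x y : we_hc (@swp p q x) (swp y) = we_ch x y.
Proof. by rewrite /we_ch /we_hc grid_le_swp. Qed.
End Transpose.

Lemma notin_imset_subset (T U : finType) (f : T -> U) (A : {set T}) b :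
  (b \notin f @: A) = (A \subset [set x | f x != b]).
Proof.
apply/negP/subsetP => [nfb x xA|sA /imsetP [x xA ebf]].
  by rewrite inE; apply/eqP => fxb; apply: nfb; rewrite -fxb imset_f.
by have := sA x xA; rewrite inE ebf eqxx.
Qed.

Lemma setT_neqE (T : finType) (P : {set T}) : (P != setT) = [exists b, b \notin P].
Proof.
apply/idP/existsP => [PT|[b Pb]]; last by apply: contraNneq Pb => ->; rewrite inE.
apply/existsP; apply: contraNT PT => /existsPn nP.
by apply/eqP/setP => b; rewrite inE; move: (nP b); rewrite negbK.
Qed.

Lemma horn_setE n (k : 'I_n.+2) (P : {set 'I_n.+2}) :
  (P != setT) && (P != setT :\ k) = [exists j, lift k j \notin P].
Proof.
apply/idP/idP => [/andP [PT PTk]|/existsP [j Pj]]; last first.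
  by apply/andP; split; apply: contraNneq Pj => ->; rewrite !inE ?(eq_sym _ k) ?neq_lift.
apply: contraNT PT => /existsPn /= liftP.
have sTkP : setT :\ k \subset P.
  by apply/subsetP => i; rewrite !inE andbT eq_sym => /unlift_some [j -> _]; apply/negPn.
have [kP|kP] := boolP (k \in P).
  apply/eqP/setP => i; rewrite inE; case: (eqVneq i k) => [-> //|ik].
  by apply: (subsetP sTkP); rewrite !inE ik.
case/negP: PTk; rewrite eqEsubset sTkP andbT; apply/subsetP => i iP.
by rewrite !inE andbT; apply: contraNneq kP => <-.
Qed.

Definition S_objT {p n : nat} (k : 'I_n.+1) : pred (seq {set grid p n}) :=
  fun s => S_obj k (xmap (@swp p n) s).

Definition horn_face {p n : nat} (k : 'I_n.+2) (c : 'I_n.+1 + 'I_p.+1) : {set grid p n.+1} :=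
  match c with inl j => vface (lift k j) | inr l => hface l end.

Lemma S_objT_cover p n (k : 'I_n.+2) : S_objT k =1 xi_cover (@grid_le p n.+1) (horn_face k).
Proof.
move=> s; rewrite /S_objT /S_obj /xi_cover (xi_obj_xmap swp_inj grid_le_swp).
congr andb; rewrite last_xmap /S_set; set A := last set0 s.
have -> : [set x.1 | x in swp @: A] = [set x.2 | x in A] by rewrite -imset_comp.
have -> : [set x.2 | x in swp @: A] = [set x.1 | x in A] by rewrite -imset_comp.
rewrite horn_setE setT_neqE.
apply/orP/existsP => [[/existsP [j] | /existsP [l]] | [[j|l] sA]].
- by rewrite notin_imset_subset => sA; exists (inl j).
- by rewrite notin_imset_subset => sA; exists (inr l).
- by left; apply/existsP; exists j; rewrite notin_imset_subset.
- by right; apply/existsP; exists l; rewrite notin_imset_subset.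
Qed.

Lemma S_objT_over p n (k : 'I_n.+2) c (s : seq {set grid p n.+1}) :
  xi_over (@grid_le p n.+1) (horn_face k c) s -> S_objT k s.
Proof. by move=> os; rewrite S_objT_cover; apply: xi_cover_over os. Qed.

Lemma xmap_swpK p q : cancel (xmap (@swp p q)) (xmap swp).
Proof.
move=> s; rewrite /xmap -map_comp -[RHS]map_id; apply: eq_map => A /=.
by rewrite -imset_comp (eq_imset _ swpK) imset_id.
Qed.

Section NXiFaces.
Variable M : RelCat.

Definition horn_extension p {n} (k : 'I_n.+1) : Prop :=
  forall F : NXT M p n,
    is_rfun (S_objT k) (@xi_le _) (xi_we (@grid_le p n) (@we_ch p n)) F ->
    exists x, is_NX x /\ agree (S_objT k) (@xi_le _) x F.

Lemma extension_swap n m (k : 'I_n.+1) :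
  (forall F : pfun M (seq {set grid n m}),
     is_rfun (S_obj k) (@xi_le _) (xi_we (@grid_le n m) (@we_hc n m)) F ->
     exists G, is_rfun (xi_obj (@grid_le n m)) (@xi_le _) (xi_we (@grid_le n m) (@we_hc n m)) G
               /\ agree (S_obj k) (@xi_le _) G F) <->
  horn_extension m k.
Proof.
have xi_obj_swp p q (t : seq {set grid p q}) :
    xi_obj (@grid_le p q) t -> xi_obj (@grid_le q p) (xmap swp t).
  by rewrite (xi_obj_xmap swp_inj grid_le_swp).
split=> [ext F FS | ext F FS].
- have /ext [G [G_rfun GF]] :
      is_rfun (S_obj k) (@xi_le _) (xi_we (@grid_le n m) (@we_hc n m)) (precomp (xmap swp) F).
    apply: (is_rfun_xmap swp_inj grid_le_swp we_ch_swp) FS => t.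
    by rewrite /S_objT xmap_swpK.
  exists (precomp (xmap swp) G); split.
    exact: (is_rfun_xmap swp_inj grid_le_swp we_hc_swp (@xi_obj_swp _ _) G_rfun).
  apply: agree_trans (agree_precomp_id _ _ (fun s _ => xmap_swpK s)).
  by apply: agree_precomp GF => // B A _ _; apply: xi_le_map.
- have /ext [x [x_NX xF]] :
      is_rfun (S_objT k) (@xi_le _) (xi_we (@grid_le m n) (@we_ch m n)) (precomp (xmap swp) F).
    exact: (is_rfun_xmap swp_inj grid_le_swp we_hc_swp) FS.
  exists (precomp (xmap swp) x); split.
    exact: (is_rfun_xmap swp_inj grid_le_swp we_ch_swp (@xi_obj_swp _ _) x_NX).
  apply: agree_trans (agree_precomp_id _ _ (fun s _ => xmap_swpK s)).
  apply: agree_precomp xF => [t|B A _ _]; last exact: xi_le_map.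
  by rewrite /S_objT xmap_swpK.
Qed.

Section Faces.
Variables p n : nat.

Lemma is_NX_dv (k i : 'I_n.+2) (F : NXT M p n.+1) :
  is_rfun (S_objT k) (@xi_le _) (xi_we (@grid_le p n.+1) (@we_ch p n.+1)) F ->
  i != k -> is_NX (dv i F).
Proof.
move=> FS; rewrite eq_sym => /unlift_some [j -> _].
apply: (is_rfun_xmap vmap_inj grid_le_vmap we_ch_vmap) FS => t ot.
by apply: (S_objT_over (c := inl j)); rewrite /= -vmap_image (xi_over_xmap vmap_inj grid_le_vmap).
Qed.

Lemma is_NX_dh (k : 'I_n.+2) (l : 'I_p.+2) (F : NXT M p.+1 n.+1) :
  is_rfun (S_objT k) (@xi_le _) (xi_we (@grid_le p.+1 n.+1) (@we_ch p.+1 n.+1)) F ->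
  is_NX (dh l F).
Proof.
move=> FS; apply: (is_rfun_xmap hmap_inj grid_le_hmap we_ch_hmap) FS => t ot.
by apply: (S_objT_over (c := inr l)); rewrite /= -hmap_image (xi_over_xmap hmap_inj grid_le_hmap).
Qed.

Lemma is_rfun_vface (i : 'I_n.+2) (Y : NXT M p n) : is_NX Y ->
  is_rfun (xi_over (@grid_le p n.+1) (vface i)) (@xi_le _) (xi_we (@grid_le p n.+1) (@we_ch p n.+1))
          (precomp (xpre (vmap i)) Y).
Proof. by rewrite -vmap_image; apply: (is_rfun_xpre vmap_inj grid_le_vmap we_ch_vmap). Qed.

Lemma is_rfun_hface (l : 'I_p.+2) (Z : NXT M p n) : is_NX Z ->
  is_rfun (xi_over (@grid_le p.+1 n) (hface l)) (@xi_le _) (xi_we (@grid_le p.+1 n) (@we_ch p.+1 n))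
          (precomp (xpre (hmap l)) Z).
Proof. by rewrite -hmap_image; apply: (is_rfun_xpre hmap_inj grid_le_hmap we_ch_hmap). Qed.

Lemma vface_agree_dv (i : 'I_n.+2) (X Y : NXT M p n.+1) :
  eqNX (dv i X) (dv i Y) -> agree (xi_over (@grid_le p n.+1) (vface i)) (@xi_le _) X Y.
Proof. by move=> XY; rewrite -vmap_image; apply: (agree_over_image vmap_inj grid_le_vmap XY). Qed.

Lemma hface_agree_dh (l : 'I_p.+2) (X Y : NXT M p.+1 n) :
  eqNX (dh l X) (dh l Y) -> agree (xi_over (@grid_le p.+1 n) (hface l)) (@xi_le _) X Y.
Proof. by move=> XY; rewrite -hmap_image; apply: (agree_over_image hmap_inj grid_le_hmap XY). Qed.

Lemma dv_agree_vface (i : 'I_n.+2) (X : NXT M p n.+1) (Y : NXT M p n) :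
  agree (xi_over (@grid_le p n.+1) (vface i)) (@xi_le _) X (precomp (xpre (vmap i)) Y) ->
  eqNX (dv i X) Y.
Proof. by rewrite -vmap_image; apply: (agree_xmap_xpre vmap_inj grid_le_vmap). Qed.

Lemma dh_agree_hface (l : 'I_p.+2) (X : NXT M p.+1 n) (Z : NXT M p n) :
  agree (xi_over (@grid_le p.+1 n) (hface l)) (@xi_le _) X (precomp (xpre (hmap l)) Z) ->
  eqNX (dh l X) Z.
Proof. by rewrite -hmap_image; apply: (agree_xmap_xpre hmap_inj grid_le_hmap). Qed.
End Faces.

Lemma compat_dv p n (D : pred 'I_n.+2) (F : NXT M p n.+1) :
  @compat (VX M p) n D (fun i => dv i F).
Proof.
case: n D F => [|n] D F //= i j ij _ _.
by split=> [t _|B A _ _ _] /=; rewrite !xmap_comp !(eq_xmap (vmap_vmap_lt ij)).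
Qed.

Lemma compat_dh p n (F : NXT M p.+1 n) : @compat (HX M n) p predT (fun l => dh l F).
Proof.
case: p F => [|p] F //= i j ij _ _.
by split=> [t _|B A _ _ _] /=; rewrite !xmap_comp !(eq_xmap (hmap_hmap_lt ij)).
Qed.

Lemma dv_dh p n (l : 'I_p.+2) (i : 'I_n.+2) (F : NXT M p.+1 n.+1) :
  eqNX (dv i (dh l F)) (dh l (dv i F)).
Proof. by split=> [t _|B A _ _ _] /=; rewrite !xmap_comp !(eq_xmap (hmap_vmap l i)). Qed.

Lemma vfaces_agree p n (D : pred 'I_n.+2) (y : 'I_n.+2 -> NXT M p n) :
  @compat (VX M p) n D y -> forall i j, D i -> D j ->
  agree (xi_over (@grid_le p n.+1) (vface i :&: vface j)) (@xi_le _)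
        (precomp (xpre (vmap i)) (y i)) (precomp (xpre (vmap j)) (y j)).
Proof.
move=> y_compat.
suff lt_case (i j : 'I_n.+2) : i < j -> D i -> D j ->
    agree (xi_over (@grid_le p n.+1) (vface j :&: vface i)) (@xi_le _)
          (precomp (xpre (vmap j)) (y j)) (precomp (xpre (vmap i)) (y i)).
  move=> i j Di Dj; case: (ltngtP i j) => [ij|ji|/val_inj <-]; last exact: agree_refl.
    by rewrite setIC; apply/agree_sym/lt_case.
  exact: lt_case.
move: i j; case: n D y y_compat => [|n] D y y_compat i j ij Di Dj.
  by apply: agree_pred0 => s; rewrite vface2_disjoint ?xi_over0 // neq_ltn ij orbT.
rewrite -!vmap_image; apply: agree_xpre_pair (y_compat i j ij Di Dj).
- exact: vmap_inj.
- exact: vmap_inj.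
- exact: inj_comp vmap_inj vmap_inj.
- by move=> a b; rewrite !grid_le_vmap.
- exact: vmap_vmap_lt.
- by rewrite !vmap_image; apply: vface_vface_lt.
Qed.

Lemma hfaces_agree p n (z : 'I_p.+2 -> NXT M p n) :
  @compat (HX M n) p predT z -> forall l l',
  agree (xi_over (@grid_le p.+1 n) (hface l :&: hface l')) (@xi_le _)
        (precomp (xpre (hmap l)) (z l)) (precomp (xpre (hmap l')) (z l')).
Proof.
move=> z_compat.
suff lt_case (i j : 'I_p.+2) : i < j ->
    agree (xi_over (@grid_le p.+1 n) (hface j :&: hface i)) (@xi_le _)
          (precomp (xpre (hmap j)) (z j)) (precomp (xpre (hmap i)) (z i)).
  move=> i j; case: (ltngtP i j) => [ij|ji|/val_inj <-]; last exact: agree_refl.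
    by rewrite setIC; apply/agree_sym/lt_case.
  exact: lt_case.
move: i j; case: p z z_compat => [|p] z z_compat i j ij.
  by apply: agree_pred0 => s; rewrite hface2_disjoint ?xi_over0 // neq_ltn ij orbT.
rewrite -!hmap_image; apply: agree_xpre_pair (z_compat i j ij isT isT).
- exact: hmap_inj.
- exact: hmap_inj.
- exact: inj_comp hmap_inj hmap_inj.
- by move=> a b; rewrite !grid_le_hmap.
- exact: hmap_hmap_lt.
- by rewrite !hmap_image; apply: hface_hface_lt.
Qed.

Lemma hvface_agree p n (l : 'I_p.+2) (i : 'I_n.+2) (Z : NXT M p n.+1) (Y : NXT M p.+1 n) :
  eqNX (dv i Z) (dh l Y) ->
  agree (xi_over (@grid_le p.+1 n.+1) (hface l :&: vface i)) (@xi_le _)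
        (precomp (xpre (hmap l)) Z) (precomp (xpre (vmap i)) Y).
Proof.
rewrite -hmap_image -vmap_image; apply: agree_xpre_pair.
- exact: hmap_inj.
- exact: vmap_inj.
- exact: inj_comp hmap_inj vmap_inj.
- by move=> a b; rewrite grid_le_hmap grid_le_vmap.
- exact: hmap_vmap.
- by rewrite hmap_image vmap_image; apply: hface_vface.
Qed.

Lemma agree_S_objT p n (k : 'I_n.+2) (X Y : NXT M p n.+1) :
  (forall c, agree (xi_over (@grid_le p n.+1) (horn_face k c)) (@xi_le _) X Y) ->
  agree (S_objT k) (@xi_le _) X Y.
Proof. by move=> XY; apply: agree_sub _ (agree_cover XY) => s; rewrite S_objT_cover. Qed.

Lemma horn_glue_extend p n (k : 'I_n.+2) (E : 'I_n.+1 + 'I_p.+1 -> NXT M p n.+1) :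
  horn_extension p k ->
  (forall c, is_rfun (xi_over (@grid_le p n.+1) (horn_face k c)) (@xi_le _)
                     (xi_we (@grid_le p n.+1) (@we_ch p n.+1)) (E c)) ->
  (forall c d, agree (xi_over (@grid_le p n.+1) (horn_face k c :&: horn_face k d)) (@xi_le _)
                     (E c) (E d)) ->
  exists x, is_NX x /\
    forall c, agree (xi_over (@grid_le p n.+1) (horn_face k c)) (@xi_le _) x (E c).
Proof.
move=> ext E_rfun E_agree.
have glue_S : is_rfun (S_objT k) (@xi_le _) (xi_we (@grid_le p n.+1) (@we_ch p n.+1))
                      (glue (inl ord0) (horn_face k) E).
  by apply: is_rfun_sub _ (glue_rfun (inl ord0) E_rfun E_agree) => s; rewrite S_objT_cover.
have [x [x_NX x_glue]] := ext _ glue_S.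
exists x; split=> // c; apply: agree_trans (glue_agree (inl ord0) E_agree c).
exact: agree_sub (@S_objT_over _ _ k c) x_glue.
Qed.

Lemma reedy_fibrant_extension : reedy_fibrant M -> extension_property M.
Proof.
move=> [K0 KS] [|n] m k // _; apply/extension_swap => F F_S.
have y_NX := is_NX_dv F_S.
suff [x [x_NX x_F]] : exists x, is_NX x /\
    forall c, agree (xi_over (@grid_le m n.+1) (horn_face k c)) (@xi_le _) x F.
  by exists x; split=> //; apply: agree_S_objT.
case: m F F_S y_NX => [|p] F F_S y_NX.
  have [x [x_NX [x_dv _]]] :=
    K0 n k (fun i => dv i F) tt y_NX I (compat_dv _ _) (fun _ _ => I).
  exists x; split=> // -[j|l] /=; first exact: vface_agree_dv (x_dv _ (lift_neq k j)).
  by rewrite hface0; apply: agree_pred0; apply: xi_over0.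
have [x [x_NX [x_dv x_dh]]] := KS p n k (fun i => dv i F) (fun l => dh l F) y_NX
  (conj (fun l => is_NX_dh l F_S) (compat_dh _)) (compat_dv _ _) (fun i _ l => dv_dh l i F).
exists x; split=> // -[j|l] /=; last exact: hface_agree_dh (x_dh l).
exact: vface_agree_dv (x_dv _ (lift_neq k j)).
Qed.

Lemma extension_reedy_fibrant : extension_property M -> reedy_fibrant M.
Proof.
move=> EP; split=> [|p] n k y z y_NX z_ok y_compat yz;
  have ext m := proj1 (extension_swap m k) (EP n.+1 m k isT).
-
  pose E (c : 'I_n.+1 + 'I_1) := let j := if c is inl j then j else ord0 in
    precomp (xpre (vmap (lift k j))) (y (lift k j)).
  have [|c d|x [x_NX x_E]] := horn_glue_extend (ext _) (E := E).
  + case=> [j|l] /=; first exact/is_rfun_vface/y_NX/lift_neq.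
    by rewrite hface0; apply/is_rfun_pred0/xi_over0.
  + case: c d => [j|l] [j'|l'] /=; rewrite ?hface0 ?setI0 ?set0I; try exact/agree_pred0/xi_over0.
    exact: vfaces_agree y_compat _ _ (lift_neq k j) (lift_neq k j').
  exists x; split=> //; split=> // i; rewrite eq_sym => /unlift_some [j -> _].
  exact: dv_agree_vface (x_E (inl j)).
- case: z_ok => z_NX z_compat.
  pose E (c : 'I_n.+1 + 'I_p.+2) := match c with
    | inl j => precomp (xpre (vmap (lift k j))) (y (lift k j))
    | inr l => precomp (xpre (hmap l)) (z l) end.
  have [|c d|x [x_NX x_E]] := horn_glue_extend (ext _) (E := E).
  + by case=> [j|l] /=; [apply/is_rfun_vface/y_NX/lift_neq | apply/is_rfun_hface/z_NX].
  + case: c d => [j|l] [j'|l'] /=.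
    * exact: vfaces_agree y_compat _ _ (lift_neq k j) (lift_neq k j').
    * by rewrite setIC; apply/agree_sym/hvface_agree/yz/lift_neq.
    * exact/hvface_agree/yz/lift_neq.
    * exact: hfaces_agree.
  exists x; split=> //; split=> [i|l]; last exact: dh_agree_hface (x_E (inr l)).
  rewrite eq_sym => /unlift_some [j -> _]; exact: dv_agree_vface (x_E (inl j)).
Qed.
End NXiFaces.

Theorem lemma5p1 (M : RelCat) : reedy_fibrant M <-> extension_property M.
Proof. split; [exact: reedy_fibrant_extension | exact: extension_reedy_fibrant]. Qed.
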